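(* Let $(X,\|\cdot\|_X)\subset(Y,\|\cdot\|_Y)$ be normed spaces, $\theta\ge0$, $m\in\mathbb N_*$, $d\in\mathbb N_*$, $e\in\mathcal E$, and let $y\in Y$ satisfy: there exists $a>1$ such that $$\limsup_{R\to\infty}\frac{L_a(R)^{1+\frac{\theta}{2m}}}{R}\,\beta_e\big(L_a(R)^{d/2m}\big)\,d_Y(y,B_X(R))<\infty.$$ Then there exists a sequence $(x_n)_{n\ge1}\subset X$ such that $$\sum_{n=1}^\infty\Big(2^{n\theta}\beta_e(2^{nd})\|y-x_n\|_Y+2^{-2nm}\|x_n\|_X\Big)<\infty.$$
   Context: Young function: $e:\mathbb R\to\mathbb R_+$ symmetric, strictly convex, $e(0)=0$. $\mathcal E$: Young functions with $e(2s)\le\lambda e(s)$ for some $\lambda>0$ and $s\mapsto e(s)/s$ nondecreasing on $(0,\infty)$. $e^{-1}(a)=\sup\{c:e(c)\le a\}$, $\beta_e(R)=R/e^{-1}(R)$. $L_a(R)=R(\ln R)^a$. $B_X(R)=\{x\in X:\|x\|_X\le R\}$, $d_Y(y,A)=\inf_{x\in A}\|y-x\|_Y$. *)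

From Stdlib Require Import Reals Lra ClassicalEpsilon.
Open Scope R_scope.

Record NormedSpace := {
  carrier :> Type;
  vzero : carrier;
  vadd : carrier -> carrier -> carrier;
  vopp : carrier -> carrier;
  vscal : R -> carrier -> carrier;
  vnorm : carrier -> R;
  vadd_assoc : forall u v w, vadd u (vadd v w) = vadd (vadd u v) w;
  vadd_comm : forall u v, vadd u v = vadd v u;
  vadd_0 : forall u, vadd u vzero = u;
  vadd_opp : forall u, vadd u (vopp u) = vzero;
  vscal_1 : forall u, vscal 1 u = u;
  vscal_assoc : forall a b u, vscal a (vscal b u) = vscal (a * b) u;
  vscal_distr_l : forall a u v, vscal a (vadd u v) = vadd (vscal a u) (vscal a v);
  vscal_distr_r : forall a b u, vscal (a + b) u = vadd (vscal a u) (vscal b u);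
  vnorm_pos : forall u, 0 <= vnorm u;
  vnorm_eq0 : forall u, vnorm u = 0 -> u = vzero;
  vnorm_scal : forall a u, vnorm (vscal a u) = Rabs a * vnorm u;
  vnorm_tri : forall u v, vnorm (vadd u v) <= vnorm u + vnorm v
}.

Definition vsub (Y : NormedSpace) (u v : Y) : Y := vadd Y u (vopp Y v).

(* A normed space X contained in Y: a linear subspace of Y (predicate mem)
   equipped with its own norm nX (only meaningful on elements of mem). *)
Record SubNormed (Y : NormedSpace) := {
  mem : Y -> Prop;
  nX : Y -> R;
  mem_0 : mem (vzero Y);
  mem_add : forall u v, mem u -> mem v -> mem (vadd Y u v);
  mem_scal : forall a u, mem u -> mem (vscal Y a u);
  nX_pos : forall u, mem u -> 0 <= nX u;
  nX_eq0 : forall u, mem u -> nX u = 0 -> u = vzero Y;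
  nX_scal : forall a u, mem u -> nX (vscal Y a u) = Rabs a * nX u;
  nX_tri : forall u v, mem u -> mem v -> nX (vadd Y u v) <= nX u + nX v
}.

Arguments mem {Y} _ _.
Arguments nX {Y} _ _.

Definition Young (e : R -> R) : Prop :=
  (forall s, 0 <= e s) /\
  (forall s, e (- s) = e s) /\
  (forall x y t, x <> y -> 0 < t < 1 ->
      e (t * x + (1 - t) * y) < t * e x + (1 - t) * e y) /\
  e 0 = 0.

Definition classE (e : R -> R) : Prop :=
  Young e /\
  (exists lam, 0 < lam /\ forall s, e (2 * s) <= lam * e s) /\
  (forall s t, 0 < s -> s <= t -> e s / s <= e t / t).

Definition einv (e : R -> R) (a : R) : R :=
  epsilon (inhabits 0) (fun r => is_lub (fun c => e c <= a) r).

Definition beta (e : R -> R) (r : R) : R := r / einv e r.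

Definition La (a r : R) : R := r * Rpower (ln r) a.

Definition is_glb (P : R -> Prop) (m : R) : Prop :=
  (forall x, P x -> m <= x) /\ (forall m', (forall x, P x -> m' <= x) -> m' <= m).

Definition distY (Y : NormedSpace) (X : SubNormed Y) (y : Y) (r : R) : R :=
  epsilon (inhabits 0)
    (fun m => is_glb (fun t => exists x, mem X x /\ nX X x <= r /\
                                         t = vnorm Y (vsub Y y x)) m).

From Stdlib Require Import Reals Lra Lia ClassicalEpsilon Classical.
Open Scope R_scope.

(* Fix n and put s = n m ln 2, so that 2^{2nm} = e^{2s}.  For n
   large choose a radius r with L_a(r) = 2^{2nm}; since a ln s < s this r
   satisfies ln r >= s.  At this radius the hypothesis gives
     2^{nθ} β_e(2^{nd}) d_Y(y, B_X(r)) <= M r / L_a(r) = M (ln r)^{-a},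
   and taking x_n in B_X(r) nearly optimal for the distance, the n-th term of
   the series is at most (|M| + 1) (ln r)^{-a} + 2^{-n} <= C n^{-a} + 2^{-n}
   (the X-norm part uses ||x_n||_X <= r).  Since a > 1 this is summable. *)

Lemma ln_le_sub1 x : 0 < x -> ln x <= x - 1.
Proof.
  intro Hx. pose proof (exp_ineq1_le (ln x)) as H. rewrite exp_ln in H; lra.
Qed.

(* Applying the tangent-line bound to sqrt y gives ln y < 2 sqrt y. *)
Lemma ln_lt_2sqrt y : 0 < y -> ln y < 2 * sqrt y.
Proof.
  intro Hy. assert (Hs : 0 < sqrt y) by (apply sqrt_lt_R0; lra).
  replace (ln y) with (ln (sqrt y * sqrt y)) by (rewrite sqrt_sqrt; lra).
  rewrite ln_mult by lra. pose proof (ln_le_sub1 _ Hs). lra.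
Qed.

Lemma ln_dominated a y : 0 < a -> 4 * a * a <= y -> a * ln y < y.
Proof.
  intros Ha Hy. assert (Hy0 : 0 < y) by nra.
  pose proof (ln_lt_2sqrt _ Hy0).
  assert (H2 : 2 * a <= sqrt y).
  { rewrite <- (sqrt_square (2 * a)) by lra.
    apply sqrt_le_1_alt; lra. }
  pose proof (sqrt_sqrt y ltac:(lra)). pose proof (sqrt_pos y). nra.
Qed.

Lemma ln_le_mono x y : 0 < x -> x <= y -> ln x <= ln y.
Proof.
  intros Hx Hxy. destruct (Rle_lt_or_eq_dec _ _ Hxy) as [H|H].
  - apply Rlt_le, ln_increasing; lra.
  - rewrite H; lra.
Qed.

Lemma Rpower_neg_antitone x y a : 0 <= a -> 0 < x <= y ->
  Rpower y (- a) <= Rpower x (- a).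
Proof.
  intros Ha Hxy. rewrite !Rpower_Ropp.
  apply Rinv_le_contravar; [apply exp_pos | apply Rle_Rpower_l; lra].
Qed.

Lemma Rpower_neg_div x c a : 0 < x -> 0 < c ->
  Rpower (x / c) (- a) = Rpower c a * Rpower x (- a).
Proof.
  intros Hx Hc. unfold Rpower, Rdiv. rewrite <- exp_plus.
  rewrite ln_mult, ln_Rinv by (try apply Rinv_0_lt_compat; lra).
  f_equal; ring.
Qed.

Lemma Rpower_pow2 k p : Rpower (2 ^ k) p = Rpower 2 (INR k * p).
Proof. rewrite <- Rpower_pow by lra. apply Rpower_mult. Qed.

Lemma telescoping_summable (t h : nat -> R) (K0 : nat) :
  (forall k, 0 <= t k) -> (forall k, 0 <= h k) ->
  (forall k, (K0 <= k)%nat -> t k <= h k - h (S k)) ->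
  exists l, infinite_sum t l.
Proof.
  intros Ht Hh Hth.
  assert (Hgrow : Un_growing (sum_f_R0 t)).
  { intro n. rewrite tech5. specialize (Ht (S n)). lra. }
  assert (Htail : forall j,
    sum_f_R0 t (K0 + j) + h (S (K0 + j)) <= sum_f_R0 t K0 + h (S K0)).
  { induction j as [|j IH]; [rewrite Nat.add_0_r; lra|].
    rewrite Nat.add_succ_r, tech5. specialize (Hth (S (K0 + j)) ltac:(lia)). lra. }
  assert (Hub : has_ub (sum_f_R0 t)).
  { exists (sum_f_R0 t K0 + h (S K0)). intros z [N ->].
    destruct (Nat.le_gt_cases K0 N) as [HN|HN].
    - specialize (Htail (N - K0)%nat). specialize (Hh (S (K0 + (N - K0)))).
      replace (K0 + (N - K0))%nat with N in * by lia. lra.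
    - pose proof (growing_prop _ K0 N Hgrow ltac:(lia)). specialize (Hh (S K0)). lra. }
  destruct (growing_cv _ Hgrow Hub) as [l Hl]. exists l. exact Hl.
Qed.

Lemma Rpower_telescoping b k : 0 < b ->
  Rpower (INR k + 2) (- (1 + b)) <=
  / b * (Rpower (INR k + 1) (- b) - Rpower (INR k + 2) (- b)).
Proof.
  intro Hb. pose proof (pos_INR k) as Hk. unfold Rpower.
  set (u := INR k + 1). set (v := INR k + 2).
  assert (Hu : 0 < u) by (unfold u; lra). assert (Hv : 0 < v) by (unfold v; lra).
  set (E := exp (- b * ln v)). assert (HE : 0 < E) by apply exp_pos.
  assert (Hgap : / v <= ln v - ln u).
  { pose proof (ln_le_sub1 (u / v) ltac:(apply Rdiv_lt_0_compat; lra)) as H.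
    unfold Rdiv in H. rewrite ln_mult, ln_Rinv in H by (try apply Rinv_0_lt_compat; lra).
    assert (u * / v - 1 = - / v) by (unfold u, v; field; lra). lra. }
  set (Z := exp (b * (ln v - ln u))).
  assert (Hu' : exp (- b * ln u) = E * Z).
  { unfold E, Z. rewrite <- exp_plus. f_equal. ring. }
  assert (Hv' : exp (- (1 + b) * ln v) = E * / v).
  { unfold E. replace (/ v) with (exp (- ln v)) by (rewrite exp_Ropp, exp_ln; lra).
    rewrite <- exp_plus. f_equal. ring. }
  assert (HZ : b * / v <= Z - 1) by (pose proof (exp_ineq1_le (b * (ln v - ln u))); unfold Z; nra).
  rewrite Hu', Hv'. fold E.
  apply Rmult_le_reg_l with b; [lra|].
  replace (b * (/ b * (E * Z - E))) with (E * (Z - 1)) by (field; lra). nra.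
Qed.

Lemma summable_dominated (t : nat -> R) (a C : R) (K0 : nat) :
  1 < a -> 0 <= C -> (forall k, 0 <= t k) ->
  (forall k, (K0 <= k)%nat -> t k <= C * Rpower (INR k + 2) (- a) + (/ 2) ^ k) ->
  exists l, infinite_sum t l.
Proof.
  intros Ha HC Ht Htk. set (b := a - 1).
  apply (telescoping_summable t
    (fun k => C * / b * Rpower (INR k + 1) (- b) + 2 * (/ 2) ^ k) K0 Ht).
  - intro k. assert (0 < / b) by (apply Rinv_0_lt_compat; unfold b; lra).
    assert (0 < Rpower (INR k + 1) (- b)) by apply exp_pos.
    assert (0 < (/ 2) ^ k) by (apply pow_lt; lra).
    assert (0 <= C * / b * Rpower (INR k + 1) (- b)) by (apply Rmult_le_pos; [apply Rmult_le_pos|]; lra).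
    lra.
  - intros k Hk. rewrite S_INR. replace (INR k + 1 + 1) with (INR k + 2) by ring.
    pose proof (Rpower_telescoping b k ltac:(unfold b; lra)) as Htel.
    replace (- (1 + b)) with (- a) in Htel by (unfold b; ring).
    specialize (Htk k Hk). simpl pow. nra.
Qed.

(* A Young function is positive at 1: by strict convexity,
   0 = e(0) < (e(1) + e(-1)) / 2 = e(1). *)
Lemma classE_pos_1 e : classE e -> 0 < e 1.
Proof.
  intros [[_ [Hsym [Hconv He0]]] _].
  specialize (Hconv 1 (-1) (/ 2) ltac:(lra) ltac:(lra)).
  replace (/ 2 * 1 + (1 - / 2) * -1) with 0 in Hconv by field.
  assert (e (-1) = e 1) by (replace (-1) with (- (1)) by ring; apply Hsym). lra.
Qed.

(* Sublevel sets of e are bounded above: e(c) >= c e(1) for c >= 1 since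
   e(s)/s is nondecreasing. *)
Lemma classE_sublevel_bounded e r : classE e -> 0 <= r -> bound (fun c => e c <= r).
Proof.
  intros HE Hr. pose proof (classE_pos_1 e HE) as He1.
  destruct HE as [_ [_ Hmon]].
  exists (1 + r / e 1). intros c Hc.
  assert (0 <= r / e 1) by (apply Rmult_le_pos; [lra | apply Rlt_le, Rinv_0_lt_compat; lra]).
  destruct (Rle_or_lt c 1) as [Hc1|Hc1]; [lra|].
  specialize (Hmon 1 c ltac:(lra) ltac:(lra)).
  assert (Hlin : c * e 1 <= e c).
  { apply Rmult_le_compat_r with (r := c) in Hmon; [|lra].
    replace (e 1 / 1 * c) with (c * e 1) in Hmon by field.
    replace (e c / c * c) with (e c) in Hmon by (field; lra). lra. }
  assert (c <= r / e 1).
  { apply Rmult_le_reg_r with (e 1); [lra|].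
    replace (r / e 1 * e 1) with r by (field; lra). lra. }
  lra.
Qed.

(* For r >= 0, e^{-1}(r) is a genuine supremum, and it is >= 0 since e(0) = 0. *)
Lemma einv_nonneg e r : classE e -> 0 <= r -> 0 <= einv e r.
Proof.
  intros HE Hr.
  assert (Hex : exists c, is_lub (fun c => e c <= r) c).
  { destruct (completeness (fun c => e c <= r)) as [c Hc].
    - apply classE_sublevel_bounded; assumption.
    - exists 0. destruct HE as [[_ [_ [_ He0]]] _]. lra.
    - exists c; exact Hc. }
  destruct (epsilon_spec (inhabits 0) _ Hex) as [Hub _].
  apply Hub. destruct HE as [[_ [_ [_ He0]]] _]. lra.
Qed.

(* beta_e is nonnegative on [0, oo) (with the convention r / 0 = 0). *)
Lemma beta_nonneg e r : classE e -> 0 <= r -> 0 <= beta e r.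
Proof.
  intros HE Hr. unfold beta. pose proof (einv_nonneg e r HE Hr).
  destruct (Req_dec (einv e r) 0) as [H0|H0].
  - rewrite H0, Rdiv_0_r. lra.
  - apply Rmult_le_pos; [lra | apply Rlt_le, Rinv_0_lt_compat; lra].
Qed.

Section Distance.
Variables (Y : NormedSpace) (X : SubNormed Y) (y : Y).

(* For r >= 0 the ball B_X(r) contains 0, so the set of distances is a
   nonempty set of nonnegative reals and d_Y(y, B_X(r)) is its infimum. *)
Lemma distY_glb r : 0 <= r ->
  is_glb (fun t => exists x, mem X x /\ nX X x <= r /\ t = vnorm Y (vsub Y y x))
         (distY Y X y r).
Proof.
  intro Hr.
  set (S := fun t => exists x, mem X x /\ nX X x <= r /\ t = vnorm Y (vsub Y y x)).
  set (z := vscal Y 0 (vzero Y)).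
  assert (Hz : mem X z) by apply mem_scal, mem_0.
  assert (Hzn : nX X z = 0)
    by (unfold z; rewrite nX_scal by apply mem_0; rewrite Rabs_R0; lra).
  assert (Hex : exists g, is_glb S g).
  { destruct (completeness (fun u => S (- u))) as [g [Hg1 Hg2]].
    - exists 0. intros u [x [_ [_ Hu]]]. pose proof (vnorm_pos Y (vsub Y y x)). lra.
    - exists (- vnorm Y (vsub Y y z)). exists z. rewrite Ropp_involutive.
      repeat split; auto. lra.
    - exists (- g). split.
      + intros t Ht. assert (- t <= g) by (apply Hg1; rewrite Ropp_involutive; auto). lra.
      + intros g' Hg'. assert (g <= - g'); [|lra].
        apply Hg2. intros u Hu. specialize (Hg' _ Hu). lra. }
  exact (epsilon_spec (inhabits 0) (fun g => is_glb S g) Hex).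
Qed.

Lemma distY_approx r c delta : 0 <= r -> 0 <= c -> 0 < delta ->
  exists x, mem X x /\ nX X x <= r /\
    c * vnorm Y (vsub Y y x) <= c * distY Y X y r + delta.
Proof.
  intros Hr Hc Hdelta. destruct (distY_glb r Hr) as [_ Hgreatest].
  set (D := distY Y X y r) in *.
  set (eps := delta / (c + 1)).
  assert (Heps : 0 < eps) by (apply Rdiv_lt_0_compat; lra).
  assert (Hnear : exists x, mem X x /\ nX X x <= r /\ vnorm Y (vsub Y y x) < D + eps).
  { apply NNPP. intro Hno.
    assert (D + eps <= D); [|lra].
    apply Hgreatest. intros t [x [Hx [Hxr ->]]].
    apply Rnot_lt_le. intro Hlt. apply Hno. exists x. auto. }
  destruct Hnear as [x [Hx [Hxr Hxy]]]. exists x. repeat split; auto.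
  assert (Hceps : c * eps <= delta).
  { unfold eps. apply Rmult_le_reg_r with (c + 1); [lra|].
    replace (c * (delta / (c + 1)) * (c + 1)) with (c * delta) by (field; lra). nra. }
  nra.
Qed.

End Distance.

Lemma La_continuous a c r : 1 < r -> continuity_pt (fun r => La a r - c) r.
Proof.
  intro Hr. unfold La, Rpower.
  assert (Hln : 0 < ln r) by (rewrite <- ln_1; apply ln_increasing; lra).
  apply continuity_pt_minus; [|apply continuity_pt_const; intros ? ?; reflexivity].
  apply continuity_pt_mult; [apply derivable_continuous_pt, derivable_pt_id|].
  change (continuity_pt (comp exp (fun x => a * ln (ln x))) r).
  apply continuity_pt_comp; [| apply derivable_continuous_pt, derivable_pt_exp].
  apply continuity_pt_scal.
  change (continuity_pt (comp ln ln) r).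
  apply continuity_pt_comp; apply derivable_continuous_pt.
  - exists (/ r). apply derivable_pt_lim_ln. lra.
  - exists (/ ln r). apply derivable_pt_lim_ln. lra.
Qed.

(* Solving L_a(R) = e^{2s}: for s large the solution satisfies R >= e^s,
   i.e. ln R is comparable to ln L_a(R).  Intermediate value theorem on
   [e^s, e^{2s}], using a ln s < s at the left end. *)
Lemma La_solve a s : 0 < a -> 1 <= s -> 4 * a * a <= s ->
  exists r, exp s <= r /\ La a r = exp (2 * s).
Proof.
  intros Ha Hs1 Hs.
  assert (Hlo : 1 + s <= exp s) by apply exp_ineq1_le.
  destruct (Ranalysis5.IVT_interv (fun r => La a r - exp (2 * s)) (exp s) (exp (2 * s)))
    as [r [Hr Hroot]].
  - intros r Hr. apply La_continuous. lra.
  - apply exp_increasing; lra.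
  - unfold La, Rpower. rewrite ln_exp, <- exp_plus.
    assert (exp (s + a * ln s) < exp (2 * s)); [|lra].
    apply exp_increasing. pose proof (ln_dominated a s Ha Hs). lra.
  - unfold La, Rpower. rewrite ln_exp.
    assert (0 < ln (2 * s)) by (rewrite <- ln_1; apply ln_increasing; lra).
    assert (1 < exp (a * ln (2 * s))) by (rewrite <- exp_0; apply exp_increasing; nra).
    pose proof (exp_pos (2 * s)). nra.
  - exists r. split; [lra|]. cbv beta in Hroot. lra.
Qed.

Lemma La_ratio a r : 1 < r -> r / La a r = Rpower (ln r) (- a).
Proof.
  intro Hr. unfold La. rewrite Rpower_Ropp.
  assert (0 < Rpower (ln r) a) by apply exp_pos. field. lra.
Qed.

Section Scales.
Variables (Y : NormedSpace) (X : SubNormed Y) (theta : R) (m d : nat)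
  (e : R -> R) (y : Y).
Hypothesis HE : classE e.
Hypothesis Hm : (1 <= m)%nat.

Definition scale_term (n : nat) (x : Y) : R :=
  Rpower 2 (INR n * theta) * beta e (2 ^ (n * d)) * vnorm Y (vsub Y y x)
  + / 2 ^ (2 * n * m) * nX X x.

(* The hypothesis of the theorem: the quantity inside the limsup is bounded
   by M for R >= R0. *)
Definition limsup_bound (a M R0 : R) : Prop :=
  forall r, R0 <= r ->
    Rpower (La a r) (1 + theta / (2 * INR m)) / r
    * beta e (Rpower (La a r) (INR d / (2 * INR m)))
    * distY Y X y r <= M.

Lemma scale_term_nonneg n x : mem X x -> 0 <= scale_term n x.
Proof.
  intro Hx. unfold scale_term.
  assert (0 <= beta e (2 ^ (n * d))) by (apply beta_nonneg; auto; apply pow_le; lra).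
  assert (0 < Rpower 2 (INR n * theta)) by apply exp_pos.
  assert (0 < / 2 ^ (2 * n * m)) by (apply Rinv_0_lt_compat, pow_lt; lra).
  pose proof (vnorm_pos Y (vsub Y y x)). pose proof (nX_pos Y X x Hx).
  apply Rplus_le_le_0_compat; apply Rmult_le_pos; try apply Rmult_le_pos; lra.
Qed.

(* At a radius r where L_a(r) = 2^{2nm}, the bound of the hypothesis reads
   2^{nθ} β_e(2^{nd}) d_Y(y, B_X(r)) <= M r / 2^{2nm}.  A near-optimal
   x in B_X(r) then makes the n-th term at most (|M| + 1) r / 2^{2nm} + 2^{-n}. *)
Lemma scale_bound_at_radius M r n : 0 < r ->
  Rpower (2 ^ (2 * n * m)) (1 + theta / (2 * INR m)) / r
  * beta e (Rpower (2 ^ (2 * n * m)) (INR d / (2 * INR m)))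
  * distY Y X y r <= M ->
  exists x, mem X x /\ scale_term n x <= (Rabs M + 1) * (r / 2 ^ (2 * n * m)) + (/ 2) ^ n.
Proof.
  intros Hr HM.
  assert (Hm0 : 0 < INR m) by (apply lt_0_INR; lia).
  set (T := 2 ^ (2 * n * m)) in *.
  assert (HT : 0 < T) by (apply pow_lt; lra).
  assert (HTP : Rpower T (1 + theta / (2 * INR m)) = T * Rpower 2 (INR n * theta)).
  { unfold T. rewrite Rpower_pow2, <- (Rpower_pow _ 2), <- Rpower_plus by lra.
    f_equal. rewrite !mult_INR. simpl (INR 2). field. lra. }
  assert (HTB : Rpower T (INR d / (2 * INR m)) = 2 ^ (n * d)).
  { unfold T. rewrite Rpower_pow2, <- Rpower_pow by lra.
    f_equal. rewrite !mult_INR. simpl (INR 2). field. lra. }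
  rewrite HTP, HTB in HM.
  set (P := Rpower 2 (INR n * theta)) in *.
  set (B := beta e (2 ^ (n * d))) in *.
  set (D := distY Y X y r) in *.
  assert (HP : 0 < P) by apply exp_pos.
  assert (HB : 0 <= B) by (apply beta_nonneg; auto; apply pow_le; lra).
  assert (HPBD : P * B * D <= M * (r / T)).
  { replace (P * B * D) with (T * P / r * B * D * (r / T)) by (field; lra).
    apply Rmult_le_compat_r; [apply Rlt_le, Rdiv_lt_0_compat|]; lra. }
  destruct (distY_approx Y X y r (P * B) ((/ 2) ^ n)) as [x [Hx [Hxr Happrox]]];
    [lra | nra | apply pow_lt; lra |].
  exists x. split; [exact Hx|]. unfold scale_term. fold P B T.
  assert (HnX : / T * nX X x <= r / T).
  { unfold Rdiv. rewrite Rmult_comm.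
    apply Rmult_le_compat_r; [apply Rlt_le, Rinv_0_lt_compat|]; lra. }
  assert (M * (r / T) <= Rabs M * (r / T))
    by (apply Rmult_le_compat_r; [apply Rlt_le, Rdiv_lt_0_compat | apply Rle_abs]; lra).
  fold D in Happrox. lra.
Qed.

(* Choosing the radius by L_a(r) = 2^{2nm} = e^{2s} with s = nm ln 2 gives
   ln r >= s, so r / L_a(r) = (ln r)^{-a} <= s^{-a}. *)
Lemma scale_estimate a M R0 n : 0 < a -> limsup_bound a M R0 ->
  let s := INR n * INR m * ln 2 in
  1 <= s -> 4 * a * a <= s -> R0 <= exp s ->
  exists x, mem X x /\ scale_term n x <= (Rabs M + 1) * Rpower s (- a) + (/ 2) ^ n.
Proof.
  intros Ha HM s Hs1 Hsa HsR0.
  destruct (La_solve a s Ha Hs1 Hsa) as [r [Hr HLa]].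
  assert (Hr1 : 1 < r) by (pose proof (exp_ineq1_le s); lra).
  assert (HT : 2 ^ (2 * n * m) = exp (2 * s)).
  { rewrite <- Rpower_pow by lra. unfold Rpower, s. rewrite !mult_INR.
    simpl (INR 2). f_equal. ring. }
  specialize (HM r ltac:(lra)). rewrite HLa, <- HT in HM.
  destruct (scale_bound_at_radius M r n ltac:(lra) HM) as [x [Hx Hbound]].
  exists x. split; [exact Hx|].
  rewrite HT, <- HLa, La_ratio in Hbound by lra.
  assert (Hlnr : s <= ln r) by (rewrite <- (ln_exp s); apply ln_le_mono; [apply exp_pos | lra]).
  pose proof (Rpower_neg_antitone s (ln r) a ltac:(lra) ltac:(lra)).
  pose proof (Rabs_pos M). nra.
Qed.

(* Once n = k + 1 is large, s = nm ln 2 exceeds all the thresholds and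
   s^{-a} <= 4^a (k+2)^{-a}, giving a summable majorant. *)
Lemma scale_estimate_eventually a M R0 K0 k : 0 < a -> limsup_bound a M R0 ->
  2 * (4 * a * a + Rabs R0 + 1) < INR K0 -> (K0 <= k)%nat ->
  exists x, mem X x /\
    scale_term (S k) x <= (Rabs M + 1) * Rpower 4 a * Rpower (INR k + 2) (- a) + (/ 2) ^ k.
Proof.
  intros Ha HM HK0 Hk.
  assert (Hm1 : 1 <= INR m) by (apply le_INR in Hm; simpl in Hm; lra).
  assert (Hk' : INR K0 <= INR k) by (apply le_INR; exact Hk).
  pose proof ln_lt_2. pose proof (pos_INR k).
  assert (Hs : (INR k + 1) / 2 <= INR (S k) * INR m * ln 2).
  { rewrite S_INR. assert (INR k + 1 <= (INR k + 1) * INR m) by nra. nra. }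
  set (s := INR (S k) * INR m * ln 2) in *.
  pose proof (Rabs_pos R0). pose proof (Rle_abs R0). pose proof (exp_ineq1_le s).
  destruct (scale_estimate a M R0 (S k) Ha HM) as [x [Hx Hbound]]; fold s; try nra.
  exists x. split; [exact Hx|].
  assert (Hdecay : Rpower s (- a) <= Rpower 4 a * Rpower (INR k + 2) (- a)).
  { rewrite <- Rpower_neg_div by lra. apply Rpower_neg_antitone; lra. }
  assert (Hgeom : (/ 2) ^ S k <= (/ 2) ^ k).
  { simpl. pose proof (pow_le (/ 2) k ltac:(lra)). lra. }
  fold s in Hbound. rewrite Rmult_assoc.
  pose proof (Rmult_le_compat_l (Rabs M + 1) _ _ ltac:(pose proof (Rabs_pos M); lra) Hdecay).
  lra.
Qed.

End Scales.

Theorem mainTheorem16 (Y : NormedSpace) (X : SubNormed Y)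
  (theta : R) (m d : nat) (e : R -> R) (y : Y) :
  0 <= theta -> (1 <= m)%nat -> (1 <= d)%nat -> classE e ->
  (exists a, 1 < a /\
     (* limsup_{R -> oo} ... < oo *)
     exists M R0, forall r, R0 <= r ->
       Rpower (La a r) (1 + theta / (2 * INR m)) / r
       * beta e (Rpower (La a r) (INR d / (2 * INR m)))
       * distY Y X y r <= M) ->
  exists x : nat -> Y,
    (forall n, (1 <= n)%nat -> mem X (x n)) /\
    exists l, infinite_sum
      (fun k => let n := S k in
         Rpower 2 (INR n * theta) * beta e (2 ^ (n * d))
           * vnorm Y (vsub Y y (x n))
         + / 2 ^ (2 * n * m) * nX X (x n)) l.
Proof.
  intros _ Hm _ HE [a [Ha [M [R0 HM]]]].
  destruct (INR_unbounded (2 * (4 * a * a + Rabs R0 + 1))) as [K0 HK0].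
  set (C := (Rabs M + 1) * Rpower 4 a).
  assert (Hstep : forall k, exists x, mem X x /\ ((K0 <= k)%nat ->
    scale_term Y X theta m d e y (S k) x <= C * Rpower (INR k + 2) (- a) + (/ 2) ^ k)).
  { intro k. destruct (Nat.le_gt_cases K0 k) as [Hk|Hk].
    - destruct (scale_estimate_eventually Y X theta m d e y HE Hm a M R0 K0 k
        ltac:(lra) HM ltac:(lra) Hk) as [x [Hx Hbound]].
      exists x. auto.
    - exists (vzero Y). split; [apply mem_0 | lia]. }
  destruct (choice _ Hstep) as [x Hx].
  exists (fun n => x (pred n)). split.
  - intros [|n] Hn; [lia | apply Hx].
  - apply (summable_dominated _ a C K0 Ha).
    + assert (0 < Rpower 4 a) by apply exp_pos. pose proof (Rabs_pos M).
      unfold C. apply Rmult_le_pos; lra.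
    + intro k. apply (scale_term_nonneg Y X theta m d e y HE), Hx.
    + intros k Hk. apply (proj2 (Hx k) Hk).
Qed.
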